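(* Let $\alpha\ge 1$. (i) The vector $(1,2,\dots,2)$ of length $\alpha$ is realized by the path $P_{2\alpha-1}$ on $2\alpha-1$ vertices, and (up to isomorphism) by no other graph. (ii) No vector of the form $(1,2,\dots,2,1)$ (with at least one entry 2) is realizable. (iii) The vector $(2,\dots,2)$ of length $\alpha$ is 0-realized by the path $P_{2\alpha}$ on $2\alpha$ vertices, and (up to isomorphism) by no other graph. (iv) No vector of the form $(2,\dots,2,1)$ (with at least one entry 2) is 0-realizable.
   Context: All graphs are finite, nonempty, and reflexive (every vertex has a loop). $N[v]$ is the closed neighborhood of $v$ (including $v$). For distinct $v,w$, $w$ strictly corners $v$ if $N[v]\subsetneq N[w]$; $v$ is then a strict corner. A vertex dominates a set if adjacent to all its vertices. Corner ranking: set $G^{(1)}=G$, $k=1$. If $G^{(k)}$ is a clique, give all its vertices rank $k$ and stop. Else if $G^{(k)}$ has no strict corners, give all its vertices rank $\infty$ and stop. Else give every strict corner of $G^{(k)}$ rank $k$, delete them to get $G^{(k+1)}$ (induced subgraph), increase $k$ and repeat. The corner rank of $G$ is the largest rank of a vertex; $X_k$ is the set of rank-$k$ vertices. A graph is cop-win (in the game of cops and robbers) iff its corner rank is finite. If $G$ has finite corner rank $\alpha\ge 2$, it is of type 1 if some (equivalently every) vertex of rank $\alpha$ dominates $V(G^{(\alpha-1)})$, and of type 0 otherwise. A vector is a finite list of positive integers. The rank cardinality vector of a graph of corner rank $\alpha$ is $(x_\alpha,\dots,x_1)$ with $x_k=|X_k|$. A vector is realizable if it is the rank cardinality vector of some cop-win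 graph, and 0-realizable if it is the rank cardinality vector of some cop-win graph of type 0. *)

From mathcomp Require Import all_boot all_order.
Set Implicit Arguments. Unset Strict Implicit. Unset Printing Implicit Defensive.

Definition is_graph (T : finType) (e : rel T) : Prop :=
  [/\ 0 < #|T|, reflexive e & symmetric e].

Definition nbhd (T : finType) (e : rel T) (S : {set T}) (v : T) : {set T} :=
  [set w in S | e v w].

Definition strict_corner (T : finType) (e : rel T) (S : {set T}) (v : T) : bool :=
  (v \in S) && [exists w in S, (w != v) && (nbhd e S v \proper nbhd e S w)].

Definition corners (T : finType) (e : rel T) (S : {set T}) : {set T} :=
  [set v in S | strict_corner e S v].

Definition is_clique (T : finType) (e : rel T) (S : {set T}) : bool :=
  [forall u in S, forall v in S, e u v].

(* G^(k) (for k >= 1): the vertex set after k-1 rounds of deleting strict corners *)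
Definition Gk (T : finType) (e : rel T) (k : nat) : {set T} :=
  iter k.-1 (fun S => S :\: corners e S) setT.

Definition stops (T : finType) (e : rel T) (k : nat) : bool :=
  is_clique e (Gk e k) || (corners e (Gk e k) == set0).

Definition corner_rank_is (T : finType) (e : rel T) (a : nat) : Prop :=
  [/\ 0 < a, is_clique e (Gk e a) & forall k, 0 < k < a -> ~~ stops e k].

Definition cop_win (T : finType) (e : rel T) : Prop := exists a, corner_rank_is e a.

(* X_k, the set of vertices of rank k, when the corner rank is a *)
Definition Xk (T : finType) (e : rel T) (a k : nat) : {set T} :=
  if k < a then Gk e k :\: Gk e k.+1 else Gk e a.

(* rank cardinality vector (x_a, ..., x_1) *)
Definition rcv (T : finType) (e : rel T) (a : nat) : seq nat :=
  [seq #|Xk e a k| | k <- rev (iota 1 a)].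

Definition has_rcv (T : finType) (e : rel T) (v : seq nat) : Prop :=
  exists a, corner_rank_is e a /\ rcv e a = v.

Definition type1 (T : finType) (e : rel T) : Prop :=
  exists a, [/\ corner_rank_is e a, 2 <= a &
    exists2 v, v \in Xk e a a & forall u, u \in Gk e a.-1 -> e v u].

Definition type0 (T : finType) (e : rel T) : Prop := cop_win e /\ ~ type1 e.

Definition realizable (v : seq nat) : Prop :=
  exists (T : finType) (e : rel T), [/\ is_graph e, cop_win e & has_rcv e v].

Definition zero_realizable (v : seq nat) : Prop :=
  exists (T : finType) (e : rel T), [/\ is_graph e, type0 e & has_rcv e v].

Definition path_graph (n : nat) : rel 'I_n :=
  fun i j => (i <= j.+1) && (j <= i.+1).

Arguments path_graph : clear implicits.

Definition graph_iso (T1 T2 : finType) (e1 : rel T1) (e2 : rel T2) : Prop :=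
  exists f : T1 -> T2, bijective f /\ forall x y, e2 (f x) (f y) = e1 x y.

From mathcomp Require Import all_boot all_order.
From mathcomp Require Import zify.
Set Implicit Arguments. Unset Strict Implicit. Unset Printing Implicit Defensive.

(* Removing the strict corners of a path on m >= 3 vertices removes its two ends
   and leaves a path on m - 2 vertices; this computes the vectors of P_(2a-1)
   and P_(2a). Conversely, suppose that G^(2) induces a path q_0 ... q_(m-1) and
   that G is not a clique. Every strict corner of G is dominated by a vertex of
   G^(2), which yields a corner x whose only neighbour in G^(2) is q_0 and a
   corner z, not adjacent to x, whose only neighbour in G^(2) is q_(m-1) (for
   m = 2 this needs that no vertex of G^(2) dominates G, which is where type 0
   enters). So G has at least two strict corners, and if it has exactly two then
   G is the path x q_0 ... q_(m-1) z. Induction on the corner rank shows that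
   the vectors (c, 2, ..., 2) with c <= 2 are realized only by paths, and that
   no such vector can be followed by a last entry 1. *)

Lemma nseqS_rcons (A : Type) (n : nat) (x : A) : nseq n.+1 x = rcons (nseq n x) x.
Proof. by rewrite -addn1 nseqD cats1. Qed.

Section CornerRanking.
Variables (T : finType) (e : rel T).
Hypotheses (eR : reflexive e) (eS : symmetric e).

(* [layer S k] is G^(k) of the subgraph induced on [S]; the definitions below
   relativize [stops], [corner_rank_is], [Xk] and [rcv] to [S], and are
   convertible to them for [S = setT]. *)
Definition peel (S : {set T}) : {set T} := S :\: corners e S.

Definition layer (S : {set T}) (k : nat) : {set T} := iter k.-1 peel S.

Definition stops_at (S : {set T}) (k : nat) : bool :=
  is_clique e (layer S k) || (corners e (layer S k) == set0).

Definition corner_rank_on (S : {set T}) (a : nat) : Prop :=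
  [/\ 0 < a, is_clique e (layer S a) & forall k, 0 < k < a -> ~~ stops_at S k].

Definition rank_class (S : {set T}) (a k : nat) : {set T} :=
  if k < a then layer S k :\: layer S k.+1 else layer S a.

Definition rcv_on (S : {set T}) (a : nat) : seq nat :=
  [seq #|rank_class S a k| | k <- rev (iota 1 a)].

Definition dominates (v : T) (A : {set T}) : bool := [forall u in A, e v u].

Definition top_nondominating (S : {set T}) (a : nat) : Prop :=
  forall v, v \in layer S a -> ~~ dominates v (layer S a.-1).

Lemma corners_sub S : corners e S \subset S.
Proof. by apply/subsetP => x; rewrite inE => /andP[]. Qed.

Lemma setD_peel S : S :\: peel S = corners e S.
Proof. by rewrite setDDr setDv set0U; apply/setIidPr/corners_sub. Qed.

Lemma card_corners S : #|corners e S| = #|S| - #|peel S|.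
Proof.
by rewrite cardsD (setIidPr (corners_sub S)) subKn // subset_leq_card ?corners_sub.
Qed.

Lemma layer_peel S k : layer S k.+2 = layer (peel S) k.+1.
Proof. by rewrite /layer -iterSr. Qed.

Lemma corner_rank_peel S a :
  corner_rank_on S a.+2 <-> corner_rank_on (peel S) a.+1 /\ ~~ stops_at S 1.
Proof.
split=> [[_ Hcl Hk] | [[_ Hcl Hk] HS]].
  split; last exact: Hk.
  split=> //; first by rewrite -layer_peel.
  by case=> // k Hka; rewrite /stops_at -layer_peel; apply: Hk.
split=> //; first by rewrite layer_peel.
by case=> [|[|k]] // Hka; rewrite /stops_at layer_peel; apply: Hk.
Qed.

Lemma corner_rank_uniq S a b : corner_rank_on S a -> corner_rank_on S b -> a = b.
Proof.
case=> Ha Hca Hka [Hb Hcb Hkb]; case: (ltngtP a b) => // H.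
  by have := Hkb a; rewrite Ha H /stops_at Hca => /(_ isT).
by have := Hka b; rewrite Hb H /stops_at Hcb => /(_ isT).
Qed.

Lemma size_rcv_on S a : size (rcv_on S a) = a.
Proof. by rewrite size_map size_rev size_iota. Qed.

Lemma rcv_on1 S : rcv_on S 1 = [:: #|S|].
Proof. by []. Qed.

Lemma rcv_on_peel S a :
  rcv_on S a.+2 = rcons (rcv_on (peel S) a.+1) #|corners e S|.
Proof.
rewrite /rcv_on; have -> : iota 1 a.+2 = 1 :: [seq k.+1 | k <- iota 1 a.+1] by rewrite -(iotaDl 1).
rewrite rev_cons map_rcons map_rev -map_comp -map_rev.
congr rcons; last by rewrite /rank_class setD_peel.
apply/eq_in_map => k; rewrite mem_rev mem_iota => /andP[Hk _].
by case: k Hk => // k _; rewrite /rank_class /= !ltnS -!layer_peel.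
Qed.

Lemma top_nondominating_peel S a :
  top_nondominating S a.+3 = top_nondominating (peel S) a.+2.
Proof. by rewrite /top_nondominating /= !layer_peel. Qed.

Definition induced_path (S : {set T}) (m : nat) (p : nat -> T) : Prop :=
  [/\ forall i, i < m -> p i \in S,
      forall x, x \in S -> exists2 i, i < m & x = p i,
      forall i j, i < m -> j < m -> p i = p j -> i = j &
      forall i j, i < m -> j < m -> e (p i) (p j) = (i <= j.+1) && (j <= i.+1)].

Lemma cliqueP (S : {set T}) : reflect {in S &, forall u v, e u v} (is_clique e S).
Proof.
apply: (iffP forall_inP) => [H u v Hu Hv | H u Hu]; first exact: forall_inP (H u Hu) v Hv.
by apply/forall_inP => v; apply: H.
Qed.

Lemma path_rev S m p : induced_path S m p -> induced_path S m (fun i => p (m.-1 - i)).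
Proof.
case=> H1 H2 H3 H4; split.
- by move=> i Hi; apply: H1; lia.
- move=> x /H2 [i Hi ->]; exists (m.-1 - i); first lia.
  by congr p; lia.
- by move=> i j Hi Hj /H3; lia.
- by move=> i j Hi Hj; rewrite H4; lia.
Qed.

Lemma path_card S m p : induced_path S m p -> #|S| = m.
Proof.
case=> H1 H2 H3 _.
have -> : S = [set p (nat_of_ord i) | i in 'I_m].
  apply/setP => x; apply/idP/imsetP => [/H2 [i Hi ->] | [i _ ->]].
  - by exists (Ordinal Hi).
  - exact: H1.
rewrite card_imset ?card_ord // => i j /H3 Eij; apply: val_inj; exact: Eij.
Qed.

Lemma path_clique S m p : induced_path S m p -> m <= 2 -> is_clique e S.
Proof.
case=> _ H2 _ H4 Hm; apply/cliqueP => _ _ /H2 [i Hi ->] /H2 [j Hj ->].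
by rewrite H4 //; lia.
Qed.

Lemma path_not_clique S m p : induced_path S m p -> 2 < m -> ~~ is_clique e S.
Proof.
case=> H1 _ _ H4 Hm; apply/cliqueP => Hcl.
by have := Hcl _ _ (H1 0 _) (H1 2 _); rewrite H4; lia.
Qed.

Lemma clique_path S : is_clique e S -> 0 < #|S| <= 2 -> exists p, induced_path S #|S| p.
Proof.
move=> /cliqueP Hcl /andP[/card_gt0P [x0 _] HS]; exists (nth x0 (enum S)).
have Hnth i : i < #|S| -> nth x0 (enum S) i \in S by rewrite cardE -mem_enum; apply: mem_nth.
split.
- exact: Hnth.
- by move=> x Hx; exists (index x (enum S)); rewrite ?nth_index ?cardE ?index_mem ?mem_enum.
- by move=> i j; rewrite cardE => Hi Hj /eqP; rewrite nth_uniq ?enum_uniq // => /eqP.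
- move=> i j Hi Hj; rewrite Hcl ?Hnth //; lia.
Qed.

Lemma path_corners S m p : induced_path S m p -> 2 < m -> forall i, i < m ->
  (p i \in corners e S) = (i == 0) || (i == m.-1).
Proof.
move=> Hp Hm.
have first_corner q : induced_path S m q -> q 0 \in corners e S.
  case=> Q1 Q2 Q3 Q4; rewrite inE /strict_corner Q1 /=; last lia.
  apply/existsP; exists (q 1); rewrite Q1 /=; last lia.
  apply/andP; split; first by apply/eqP => /Q3; lia.
  apply/properP; split.
    apply/subsetP => y; rewrite !inE => /andP[/Q2 [j Hj ->]].
    by rewrite Q1 //= !Q4; lia.
  by exists (q 2); rewrite !inE Q1 ?Q4 /=; lia.
have [H1 H2 _ H4] := Hp; move=> i Hi.
have [/orP[/eqP -> | /eqP ->] | Hmid] := boolP ((i == 0) || (i == m.-1)).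
- exact: first_corner.
- by have := first_corner _ (path_rev Hp); rewrite subn0.
apply/negbTE; rewrite inE /strict_corner.
apply/negP => /andP[_ /andP[_ /existsP[w /andP[/H2 [j Hj ->] /andP[Hne /properP[Hsub _]]]]]].
have Hprev : p i.-1 \in nbhd e S (p j).
  by apply: (subsetP Hsub); rewrite inE H1 ?H4 /=; lia.
have Hnext : p i.+1 \in nbhd e S (p j).
  by apply: (subsetP Hsub); rewrite inE H1 ?H4 /=; lia.
move: Hprev Hnext; rewrite !inE => /andP[_ Hprev] /andP[_ Hnext].
rewrite H4 in Hprev; try lia. rewrite H4 in Hnext; try lia.
have Eij : j = i by lia.
by rewrite Eij eqxx in Hne.
Qed.

Lemma path_peel S m p : induced_path S m p -> 2 < m ->
  induced_path (peel S) (m - 2) (fun i => p i.+1).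
Proof.
move=> Hp Hm; have [H1 H2 H3 H4] := Hp; split.
- by move=> i Hi; rewrite in_setD (path_corners Hp) ?H1 //=; lia.
- move=> y; rewrite in_setD => /andP[Hy /H2 [j Hj Ej]]; subst y.
  rewrite (path_corners Hp) // in Hy.
  by exists j.-1; [lia | congr p; lia].
- by move=> i j Hi Hj /H3; lia.
- by move=> i j Hi Hj; rewrite H4; lia.
Qed.

Lemma path_iso m p : induced_path setT m p -> graph_iso e (path_graph m).
Proof.
case=> _ P2 P3 P4.
have : forall x : T, exists i : 'I_m, p i = x.
  by move=> x; case: (P2 x (in_setT x)) => i Hi ->; exists (Ordinal Hi).
case/fin_all_exists => f Hf; exists f; split.
  exists (fun i : 'I_m => p i) => [x | i]; first exact: Hf.
  by apply: val_inj; apply: P3 (ltn_ord _) (ltn_ord _) (Hf (p i)).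
by move=> x y; rewrite -{2}(Hf x) -{2}(Hf y) P4.
Qed.

Lemma peelUcorners S : peel S :|: corners e S = S.
Proof.
apply/setP => y; rewrite in_setU in_setD.
by case: (boolP (y \in corners e S)) => [/(subsetP (corners_sub S)) -> | _]; rewrite ?orbT ?orbF.
Qed.

Lemma nbhd_sub_adj S u v y : nbhd e S u \subset nbhd e S v -> y \in S -> e u y -> e v y.
Proof. by move=> /subsetP Hs Hy Huy; have := Hs y; rewrite !inE Hy Huy => /(_ isT). Qed.

(* A dominator of c with the largest neighbourhood is not itself a strict corner. *)
Lemma corner_dominated S c : c \in corners e S ->
  exists2 w, w \in peel S & nbhd e S c \subset nbhd e S w.
Proof.
move=> Hc; have HcS := subsetP (corners_sub S) c Hc.
pose P w := (w \in S) && (nbhd e S c \subset nbhd e S w).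
have Pc : P c by rewrite /P HcS subxx.
case: (arg_maxnP (fun w => #|nbhd e S w|) Pc) => w /andP[HwS Hsub] Hmax.
exists w => //; rewrite in_setD HwS andbT inE HwS /= /strict_corner HwS /=.
apply/existsP => -[w' /andP[Hw'S /andP[_ Hpr]]].
have := Hmax w'; rewrite /P Hw'S (subset_trans Hsub (proper_sub Hpr)) => /(_ isT).
by have := proper_card Hpr; lia.
Qed.

Lemma path_end_corner S m q x : induced_path (peel S) m q -> 1 < m ->
  x \in corners e S -> e x (q 0) -> ~~ e x (q 1) ->
  nbhd e S x \subset nbhd e S (q 0) /\ {in peel S, forall y, e x y = (y == q 0)}.
Proof.
case=> Q1 Q2 _ Q4 Hm Hx Hx0 Hx1.
have peelS y : y \in peel S -> y \in S by rewrite in_setD => /andP[].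
case: (corner_dominated Hx) => _ /Q2 [i Hi ->] Hsub.
have Hix : e (q i) x := nbhd_sub_adj Hsub (subsetP (corners_sub S) x Hx) (eR x).
have : e (q i) (q 0) := nbhd_sub_adj Hsub (peelS _ (Q1 0 (ltnW Hm))) Hx0.
rewrite Q4 ?(ltnW Hm) // => Hi1.
have Ei : i = 0.
  by case: i Hi Hix Hi1 {Hsub} => [|[|i]] //= _; rewrite eS (negbTE Hx1).
subst i; split=> // y Hy; apply/idP/eqP => [Hxy | -> //].
case/Q2: (Hy) => j Hj Ey; subst y.
have : e (q 0) (q j) := nbhd_sub_adj Hsub (peelS _ Hy) Hxy.
rewrite Q4 ?(ltnW Hm) //.
by case: j Hj Hxy {Hy} => [|[|j]] //= _; rewrite (negbTE Hx1).
Qed.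

Lemma path_end_corner_exists S m q : induced_path (peel S) m q -> 1 < m ->
  (m = 2 -> top_nondominating S 2) ->
  exists x, [/\ x \in corners e S, e x (q 0) & ~~ e x (q 1)].
Proof.
case=> Q1 Q2 Q3 Q4 Hm Hnd.
have peelS i : i < m -> q i \in S by move=> /Q1; rewrite in_setD => /andP[].
have corner_out y : y \in S -> (forall i, i < m -> y != q i) -> y \in corners e S.
  move=> Hy Hout; move: Hy; rewrite -{1}(peelUcorners S) in_setU => /orP[/Q2 [i Hi Ey] | //].
  by have := Hout i Hi; rewrite Ey eqxx.
case: (ltngtP m 2) => Hm2; first lia.
- have Hq0 : q 0 \notin corners e S.
    by move: (Q1 0 (ltnW Hm)); rewrite in_setD => /andP[].
  (* q 0 is not strictly cornered by q 1, so a neighbour of q 0 off the path misses q 1 *)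
  have : ~~ (nbhd e S (q 0) \subset nbhd e S (q 1)).
    apply: contra Hq0 => Hs; rewrite inE peelS ?(ltnW Hm) //=.
    rewrite /strict_corner peelS ?(ltnW Hm) //=; apply/existsP; exists (q 1).
    rewrite peelS //=; apply/andP; split; first by apply/eqP => /Q3; lia.
    by apply/properP; split => //; exists (q 2); rewrite !inE peelS ?Q4 //=; lia.
  case/subsetPn => y; rewrite !inE => /andP[HyS Hy0]; rewrite HyS /= => Hy1.
  exists y; split; last by rewrite eS.
  - apply: corner_out HyS _ => i Hi; apply: contraNneq Hy1 => Ey.
    by move: Hy0; rewrite Ey !Q4 ?(ltnW Hm) //; lia.
  - by rewrite eS.
- have /forall_inPn [u HuS Hu1] := Hnd Hm2 (q 1) (Q1 1 Hm).
  have HuC : u \in corners e S.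
    by apply: corner_out HuS _ => i Hi; apply: contraNneq Hu1 => ->; rewrite Q4; lia.
  exists u; split=> //; last by rewrite eS.
  case: (corner_dominated HuC) => _ /Q2 [i Hi ->] Hsub.
  have := nbhd_sub_adj Hsub (subsetP (corners_sub S) u HuC) (eR u).
  by case: i Hi {Hsub} => [|[|i]] Hi; [rewrite eS | rewrite (negbTE Hu1) | lia].
Qed.

Lemma peel_path_corners S m q : induced_path (peel S) m q -> 0 < m ->
  ~~ is_clique e S -> (m = 2 -> top_nondominating S 2) ->
  exists x z, [/\ x \in corners e S, z \in corners e S, ~~ e x z,
    {in peel S, forall y, e x y = (y == q 0)} &
    {in peel S, forall y, e z y = (y == q m.-1)}].
Proof.
move=> Hq Hm Hncl Hnd; have [Q1 Q2 Q3 _] := Hq.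
have cornerS c : c \in corners e S -> c \in S := subsetP (corners_sub S) c.
case: (ltngtP m 1) => Hm1; first lia.
- have Hqr := path_rev Hq.
  have [x [Hx Hx0 Hx1]] := path_end_corner_exists Hq Hm1 Hnd.
  have [z [Hz Hz0 Hz1]] := path_end_corner_exists Hqr Hm1 Hnd.
  have [Hxs Hxn] := path_end_corner Hq Hm1 Hx Hx0 Hx1.
  have [_ Hzn] := path_end_corner Hqr Hm1 Hz Hz0 Hz1.
  rewrite subn0 in Hzn; exists x, z; split=> //.
  apply/negP => Hxz.
  have : e z (q 0) by rewrite eS; apply: nbhd_sub_adj Hxs (cornerS z Hz) Hxz.
  by rewrite Hzn ?Q1 // => /eqP /Q3; lia.
- subst m; have Ep y : y \in peel S -> y = q 0 by case/Q2 => i Hi ->; congr q; lia.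
  have corner_adj c : c \in corners e S -> e c (q 0).
    move=> Hc; case: (corner_dominated Hc) => w /Ep -> Hsub.
    by rewrite eS; apply: nbhd_sub_adj Hsub (cornerS c Hc) (eR c).
  have center_adj y : y \in S -> e (q 0) y.
    by rewrite -{1}(peelUcorners S) in_setU => /orP[/Ep -> | /corner_adj]; rewrite // eS.
  case/forall_inPn: Hncl => u HuS /forall_inPn [v HvS Huv].
  have Hu : u \in corners e S.
    move: HuS; rewrite -{1}(peelUcorners S) in_setU => /orP[/Ep Eu | //].
    by move: Huv; rewrite Eu center_adj.
  have Hv : v \in corners e S.
    move: HvS; rewrite -{1}(peelUcorners S) in_setU => /orP[/Ep Ev | //].
    by move: Huv; rewrite Ev eS center_adj.
  by exists u, v; split=> // y /Ep ->; rewrite eqxx corner_adj.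
Qed.

Lemma path_cons H m q x : induced_path H m q -> 0 < m -> x \notin H ->
  {in H, forall y, e x y = (y == q 0)} ->
  induced_path (x |: H) m.+1 (fun i => if i is i'.+1 then q i' else x).
Proof.
case=> Q1 Q2 Q3 Q4 Hm HxH Hx.
have xq i : i < m -> e x (q i) = (i == 0).
  by move=> Hi; rewrite Hx ?Q1 //; apply/eqP/eqP => [/Q3 | ->]; [apply | ].
split.
- by case=> [|i] Hi; rewrite in_setU1 ?eqxx // Q1 ?orbT.
- move=> y; rewrite in_setU1 => /orP[/eqP -> | /Q2 [i Hi ->]]; first by exists 0.
  by exists i.+1.
- case=> [|i] [|j] //= Hi Hj.
  + by move=> Ex; move: HxH; rewrite Ex Q1.
  + by move=> Ex; move: HxH; rewrite -Ex Q1.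
  + by move/Q3 => ->.
- case=> [|i] [|j] Hi Hj /=.
  + by rewrite eR.
  + by rewrite xq //; case: j {Hi Hj}.
  + by rewrite eS xq //; case: i {Hi Hj}.
  + by rewrite Q4.
Qed.

Lemma peel_path_extend S m q : induced_path (peel S) m q -> 0 < m ->
  #|corners e S| <= 2 -> ~~ is_clique e S -> (m = 2 -> top_nondominating S 2) ->
  exists p, induced_path S m.+2 p.
Proof.
case: m => // n Hq _ Hcard Hncl Hnd.
have [x [z [Hx Hz Hxz Hxn Hzn]]] := peel_path_corners Hq isT Hncl Hnd.
have notpeel c : c \in corners e S -> c \notin peel S by rewrite in_setD => ->.
have Hxz' : x != z by apply: contraNneq Hxz => ->.
have Ecorners : corners e S = [set x; z].
  apply/eqP; rewrite eq_sym eqEcard cards2 Hxz' Hcard andbT.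
  by apply/subsetP => y; rewrite in_set2 => /orP[] /eqP ->.
have ES : z |: (x |: peel S) = S.
  rewrite -[RHS]peelUcorners Ecorners; apply/setP => y.
  by rewrite !in_setU !in_set1; case: (y == x); case: (y == z); rewrite ?orbT ?orbF.
have Hz' : z \notin x |: peel S by rewrite in_setU1 negb_or eq_sym Hxz' notpeel.
have Hzn' : {in x |: peel S, forall y, e z y = (y == q n)}.
  move=> y; rewrite in_setU1 => /orP[/eqP -> | /Hzn //].
  rewrite eS (negbTE Hxz); apply/esym/eqP => Ex.
  by have [Q1 _ _ _] := Hq; move: (notpeel x Hx); rewrite Ex Q1.
have Hp1 := path_cons Hq isT (notpeel x Hx) Hxn.
have Hp2 := path_cons (path_rev Hp1) isT Hz'; rewrite subn0 /= ES in Hp2.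
by eexists; apply: Hp2.
Qed.

Lemma path_corner_rank a c S p : 0 < c <= 2 -> induced_path S (a.*2 + c) p ->
  [/\ corner_rank_on S a.+1, rcv_on S a.+1 = c :: nseq a 2 &
      (c = 2 -> 0 < a -> top_nondominating S a.+1)].
Proof.
elim: a S p => [|a IH] S p Hc Hp.
  split=> //; last by rewrite rcv_on1 (path_card Hp).
  by split=> [//||k]; [apply: path_clique Hp _ | ]; lia.
have Hm : 2 < a.+1.*2 + c by lia.
have Hq := path_peel Hp Hm; rewrite doubleS !addSn subn2 /= in Hq.
have [Hcr Hrcv Hnd] := IH _ _ Hc Hq.
have Hcorners : #|corners e S| = 2.
  by rewrite card_corners (path_card Hp) (path_card Hq); lia.
split.
- apply/corner_rank_peel; split=> //.
  by rewrite /stops_at negb_or (path_not_clique Hp Hm) -cards_eq0 Hcorners.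
- by rewrite rcv_on_peel Hrcv Hcorners nseqS_rcons.
- move=> c2 _; case: a {IH Hm Hcr Hrcv} Hnd Hp Hq => [_ | a Hnd _ _].
    rewrite c2 => -[P1 _ _ P4] [_ Q2 _ _] v /Q2 [i Hi ->]; apply/forall_inPn.
    exists (p (if i == 0 then 3 else 0)); first by rewrite P1; case: (i == 0).
    by rewrite P4; case: (i =P 0) => //=; lia.
  by rewrite top_nondominating_peel; apply: Hnd.
Qed.

Lemma rcv_path a c S : 0 < c <= 2 -> corner_rank_on S a.+1 ->
  rcv_on S a.+1 = c :: nseq a 2 -> (c = 2 -> 0 < a -> top_nondominating S a.+1) ->
  exists p, induced_path S (a.*2 + c) p.
Proof.
elim: a S => [|a IH] S Hc Hcr Hrcv Hnd.
  case: Hcr => _ Hcl _; move: Hrcv; rewrite rcv_on1 => -[Ec].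
  by rewrite -Ec; apply: clique_path; rewrite ?Ec.
move: Hrcv; rewrite rcv_on_peel nseqS_rcons -rcons_cons => /rcons_inj [Hrcv Hcorners].
have [Hcr' Hns] := (corner_rank_peel S a).1 Hcr.
have [q Hq] : exists q, induced_path (peel S) (a.*2 + c) q.
  apply: IH Hc Hcr' Hrcv _ => c2; case: a {Hcr} Hnd => // a Hnd _.
  by rewrite -top_nondominating_peel; apply: Hnd.
have Hncl : ~~ is_clique e S by move: Hns; rewrite /stops_at negb_or => /andP[].
rewrite doubleS !addSn; apply: peel_path_extend Hq _ _ Hncl _; rewrite ?Hcorners //; first lia.
move=> Hm2; have Ea : a = 0 by lia.
by subst a; apply: Hnd; lia.
Qed.

Lemma rcv_not_rcons1 a c S : 0 < c <= 2 -> corner_rank_on S a.+2 ->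
  (c = 2 -> top_nondominating S a.+2) -> rcv_on S a.+2 <> rcons (c :: nseq a 2) 1.
Proof.
move=> Hc Hcr Hnd; rewrite rcv_on_peel => /rcons_inj [Hrcv Hcorners].
have [Hcr' Hns] := (corner_rank_peel S a).1 Hcr.
have [q Hq] : exists q, induced_path (peel S) (a.*2 + c) q.
  apply: rcv_path Hc Hcr' Hrcv _ => c2; case: a {Hcr} Hnd => // a Hnd _.
  by rewrite -top_nondominating_peel; apply: Hnd.
have Hncl : ~~ is_clique e S by move: Hns; rewrite /stops_at negb_or => /andP[].
have Hnd2 : a.*2 + c = 2 -> top_nondominating S 2.
  move=> Hm2; have Ea : a = 0 by lia.
  by subst a; apply: Hnd; lia.
have Hm : 0 < a.*2 + c by lia.
have [x [z [Hx Hz Hxz _ _]]] := peel_path_corners Hq Hm Hncl Hnd2.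
have : [set x; z] \subset corners e S by apply/subsetP => y; rewrite in_set2 => /orP[] /eqP ->.
move/subset_leq_card; rewrite cards2 Hcorners.
by case: eqP Hxz => [-> | //]; rewrite eR.
Qed.

Lemma type0_top_nondominating a : type0 e -> corner_rank_on setT a -> 1 < a ->
  top_nondominating setT a.
Proof.
case=> _ Hn1 Hcr Ha v Hv; apply/negP => /forall_inP Hdom; apply: Hn1.
by exists a; split=> //; exists v => //; rewrite /Xk ltnn.
Qed.

Lemma path_type0 a p : induced_path setT (a.*2 + 2) p -> type0 e.
Proof.
move=> Hp; have [Hcr _ Hnd] := path_corner_rank (c := 2) isT Hp.
split; first by exists a.+1.
case=> b [Hcr' Hb [v Hv Hdom]].
have Eb := corner_rank_uniq Hcr Hcr'; subst b.
have Hv' : v \in layer setT a.+1 by move: Hv; rewrite /Xk ltnn.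
by move/negP: (Hnd erefl Hb v Hv'); apply; apply/forall_inP.
Qed.

Lemma has_rcv_path a c : 0 < c <= 2 -> (c = 2 -> 0 < a -> type0 e) ->
  has_rcv e (c :: nseq a 2) -> graph_iso e (path_graph (a.*2 + c)).
Proof.
move=> Hc Ht0 [b [Hcr Hrcv]].
have Hrcv' : rcv_on setT b = c :: nseq a 2 := Hrcv.
have := size_rcv_on setT b; rewrite Hrcv' /= size_nseq => Eb.
subst b; have Hnd : c = 2 -> 0 < a -> top_nondominating setT a.+1.
  by move=> c2 Ha; apply: type0_top_nondominating (Ht0 c2 Ha) Hcr _.
have [p Hp] := rcv_path Hc Hcr Hrcv' Hnd.
exact: path_iso Hp.
Qed.

Lemma not_has_rcv_rcons1 a c : 0 < c <= 2 -> (c = 2 -> type0 e) ->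
  ~ has_rcv e (rcons (c :: nseq a 2) 1).
Proof.
move=> Hc Ht0 [b [Hcr Hrcv]].
have Hrcv' : rcv_on setT b = rcons (c :: nseq a 2) 1 := Hrcv.
have := size_rcv_on setT b; rewrite Hrcv' size_rcons /= size_nseq => Eb.
subst b; have Hnd : c = 2 -> top_nondominating setT a.+2.
  by move=> c2; apply: type0_top_nondominating (Ht0 c2) Hcr _.
exact: rcv_not_rcons1 Hc Hcr Hnd Hrcv'.
Qed.

End CornerRanking.

Lemma path_graph_is_graph n : 0 < n -> is_graph (path_graph n).
Proof.
move=> Hn; split; first by rewrite card_ord.
- by move=> i; rewrite /path_graph !leqnSn.
- by move=> i j; rewrite /path_graph andbC.
Qed.

Lemma path_graph_induced n (x0 : 'I_n) : induced_path (path_graph n) setT n (insubd x0).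
Proof.
split.
- by move=> i _; rewrite in_setT.
- move=> y _; exists (val y); first exact: ltn_ord.
  by apply: val_inj; rewrite /= val_insubd ltn_ord.
- by move=> i j Hi Hj /(congr1 val); rewrite !val_insubd Hi Hj.
- by move=> i j Hi Hj; rewrite /path_graph !val_insubd Hi Hj.
Qed.

Lemma path_graph_rank a c : 0 < c <= 2 ->
  [/\ is_graph (path_graph (a.*2 + c)), corner_rank_is (path_graph (a.*2 + c)) a.+1,
      rcv (path_graph (a.*2 + c)) a.+1 = c :: nseq a 2 &
      c = 2 -> type0 (path_graph (a.*2 + c))].
Proof.
move=> Hc; have Hn : 0 < a.*2 + c by lia.
have Hp := path_graph_induced (Ordinal Hn).
have [Hcr Hrcv _] := path_corner_rank Hc Hp.
split=> // [|c2]; first exact: path_graph_is_graph.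
by subst c; apply: path_type0 Hp.
Qed.

Theorem theorem3p22 (alpha : nat) (Halpha : 1 <= alpha) :
  (* (i) *)
  ([/\ is_graph (path_graph (alpha.*2.-1)), cop_win (path_graph (alpha.*2.-1)),
       has_rcv (path_graph (alpha.*2.-1)) (1 :: nseq alpha.-1 2) &
       forall (T : finType) (e : rel T), is_graph e -> cop_win e ->
         has_rcv e (1 :: nseq alpha.-1 2) -> graph_iso e (path_graph (alpha.*2.-1))])
  /\
  (* (ii) *)
  (3 <= alpha -> ~ realizable (1 :: rcons (nseq (alpha - 2) 2) 1))
  /\
  (* (iii) *)
  ([/\ is_graph (path_graph (alpha.*2)), type0 (path_graph (alpha.*2)),
       has_rcv (path_graph (alpha.*2)) (nseq alpha 2) &
       forall (T : finType) (e : rel T), is_graph e -> type0 e ->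
         has_rcv e (nseq alpha 2) -> graph_iso e (path_graph (alpha.*2))])
  /\
  (* (iv) *)
  (2 <= alpha -> ~ zero_realizable (rcons (nseq alpha.-1 2) 1)).
Proof.
case: alpha Halpha => // a _.
have -> : a.+1.*2.-1 = a.*2 + 1 by lia.
have -> : a.+1.*2 = a.*2 + 2 by lia.
split; [|split; [|split]].
- have [Hg Hcr Hrcv _] := path_graph_rank a (c := 1) isT.
  split=> //; [by exists a.+1 | by exists a.+1 |].
  by move=> T e [_ eR eS] _; apply: (has_rcv_path eR eS).
- case: a => [|[|b]] // _ [T [e [[_ eR eS] _ Hrcv]]].
  by apply: (not_has_rcv_rcons1 eR eS (a := b.+1) (c := 1)) Hrcv.
- have [Hg Hcr Hrcv Ht0] := path_graph_rank a (c := 2) isT.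
  split=> //; [exact: Ht0 | by exists a.+1 |].
  by move=> T e [_ eR eS] Ht0'; apply: (has_rcv_path eR eS (c := 2) isT (fun _ _ => Ht0')).
- case: a => [|b] // _ [T [e [[_ eR eS] Ht0 Hrcv]]].
  exact: (not_has_rcv_rcons1 eR eS (a := b) (c := 2) isT (fun _ => Ht0)) Hrcv.
Qed.
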